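(* Let $n$ and $x$ be positive integers with $x\le n$, and let $\mathcal M=\{M_1,\dots,M_s\}$ be a collection of perfect matchings of the complete graph $K_{2n}$. If $$s<\frac{x!}{2^x}\cdot\frac{\binom{2n}{x}\binom{2n-x}{x}}{\binom{n}{x}^2},$$ then there exists a perfect matching $M$ of $K_{2n}$ such that $|M\cap M_i|\le x-1$ for every $i\in\{1,\dots,s\}$.
   Context: A perfect matching of $K_{2n}$ is a set of $n$ pairwise vertex-disjoint edges covering all $2n$ vertices. A perfect matching $M$ ''agrees with $M_i$ in at most $x-1$ edges'' means $|M\cap M_i|\le x-1$. *)

From mathcomp Require Import all_boot all_order all_algebra.
Set Implicit Arguments. Unset Strict Implicit. Unset Printing Implicit Defensive.

Definition is_edge (m : nat) (e : {set 'I_m}) : bool := #|e| == 2.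

Definition perfect_matching (m : nat) (M : {set {set 'I_m}}) : bool :=
  [forall e in M, is_edge e] &&
  [forall v : 'I_m, #|[set e in M | v \in e]| == 1].

From mathcomp Require Import all_boot all_order all_algebra.
From mathcomp Require Import ring zify.
Set Implicit Arguments. Unset Strict Implicit. Unset Printing Implicit Defensive.
Import GRing.Theory Num.Theory.

(* Union bound. A graph on 2k vertices has (2k-1)!! perfect matchings, and a
   matching sharing at least x edges with a fixed perfect matching N of K_2n
   contains one of the 'C(n, x) x-subsets of N, each of which extends in
   (2(n-x)-1)!! ways. By the identity
     x! 'C(2n, x) 'C(2n-x, x) (2(n-x)-1)!! = 2^x 'C(n, x) (2n-1)!!
   the hypothesis on s says s 'C(n, x) (2(n-x)-1)!! < (2n-1)!!, so some
   perfect matching meets every M_i in fewer than x edges. *)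

Lemma card_bigcup_leq (I T : finType) (A : {pred I}) (B : I -> {set T}) :
  #|\bigcup_(i in A) B i| <= \sum_(i in A) #|B i|.
Proof.
elim/big_ind2: _ => [|S1 k1 S2 k2 h1 h2|//]; first by rewrite cards0.
by apply: leq_trans (leq_add h1 h2); rewrite cardsU leq_subr.
Qed.

(* [dfact k] is the double factorial (2k-1)!!. *)
Fixpoint dfact k := if k is k'.+1 then k'.*2.+1 * dfact k' else 1.

Lemma dfact_gt0 k : 0 < dfact k.
Proof. by elim: k => //= k IH; rewrite muln_gt0 IH. Qed.

Lemma dfactE k : dfact k * (2 ^ k * k`!) = (k.*2)`!.
Proof.
elim: k => // k IHk; rewrite doubleS !factS -IHk /= expnS -addnn; ring.
Qed.

Section PerfectMatchings.

Variable T : finType.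
Implicit Types (V : {set T}) (M F : {set {set T}}) (e : {set T}).

(* Perfect matchings of an arbitrary vertex set, so that removing the edges
   of a submatching leaves a perfect matching of the remaining vertices. *)
Definition pmatchings V : {set {set {set T}}} :=
  [set M : {set {set T}} | [forall e in M, (#|e| == 2) && (e \subset V)] &&
           [forall v in V, #|[set e in M | v \in e]| == 1]].

Lemma pmatching_edge V M e :
  M \in pmatchings V -> e \in M -> #|e| = 2 /\ e \subset V.
Proof.
rewrite inE => /andP[/forallP edgeM _] eM.
by have /implyP/(_ eM)/andP[/eqP -> ->] := edgeM e.
Qed.

Lemma pmatching_cover V M v :
  M \in pmatchings V -> v \in V -> exists2 e, e \in M & v \in e.
Proof.
rewrite inE => /andP[_ /forallP coverM] vV.
have /implyP/(_ vV)/cards1P[e0 De0] := coverM v.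
have : e0 \in [set e in M | v \in e] by rewrite De0 set11.
by rewrite inE => /andP[]; exists e0.
Qed.

Lemma pmatching_uniq V M e1 e2 v : M \in pmatchings V ->
  e1 \in M -> e2 \in M -> v \in e1 -> v \in e2 -> e1 = e2.
Proof.
move=> MV e1M e2M v1 v2.
have vV : v \in V by have [_ /subsetP] := pmatching_edge MV e1M; apply.
move: MV; rewrite inE => /andP[_ /forallP coverM].
have /implyP/(_ vV)/cards1P[e0 De0] := coverM v.
have : e1 \in [set e in M | v \in e] by rewrite inE e1M v1.
have : e2 \in [set e in M | v \in e] by rewrite inE e2M v2.
by rewrite De0 !inE => /eqP -> /eqP ->.
Qed.

Lemma pmatchingI V M :
  (forall e, e \in M -> #|e| = 2 /\ e \subset V) ->
  (forall v, v \in V -> exists2 e, e \in M & v \in e) ->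
  (forall e1 e2 v, e1 \in M -> e2 \in M -> v \in e1 -> v \in e2 -> e1 = e2) ->
  M \in pmatchings V.
Proof.
move=> edgeM coverM uniqM; rewrite inE; apply/andP; split.
  by apply/forallP => e; apply/implyP => eM; have [-> ->] := edgeM e eM.
apply/forallP => v; apply/implyP => vV; apply/cards1P.
have [e eM ve] := coverM v vV; exists e; apply/setP => f.
by rewrite !inE; apply/andP/eqP => [[fM vf]|->] //; apply: uniqM fM eM vf ve.
Qed.

Lemma pmatching_setD V M F : M \in pmatchings V -> F \subset M ->
  M :\: F \in pmatchings (V :\: cover F).
Proof.
move=> MV FM; apply: pmatchingI.
- move=> e; rewrite inE => /andP[eF eM].
  have [e2 eV] := pmatching_edge MV eM; split=> //.
  apply/subsetP => u ue; rewrite inE (subsetP eV) // andbT.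
  apply/negP => /bigcupP[f fF uf].
  by move: eF; rewrite (pmatching_uniq MV eM (subsetP FM f fF) ue uf) fF.
- move=> v; rewrite inE => /andP[vF vV].
  have [e eM ve] := pmatching_cover MV vV; exists e => //.
  rewrite inE eM andbT; apply: contra vF => eF.
  by apply/bigcupP; exists e.
- move=> e1 e2 v; rewrite !inE => /andP[_ e1M] /andP[_ e2M].
  exact: pmatching_uniq MV e1M e2M.
Qed.

Lemma pmatching_setU1 V M e : e \subset V -> #|e| = 2 ->
  M \in pmatchings (V :\: e) -> e |: M \in pmatchings V.
Proof.
move=> eV e2 MV.
have eM_disj f u : f \in M -> u \in f -> u \notin e.
  move=> fM uf; have [_ /subsetP/(_ u uf)] := pmatching_edge MV fM.
  by rewrite inE => /andP[].
apply: pmatchingI.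
- move=> f; rewrite !inE => /orP[/eqP-> //|fM].
  have [f2 fV] := pmatching_edge MV fM.
  by split=> //; apply: subset_trans fV (subsetDl _ _).
- move=> v vV; have [ve|ve] := boolP (v \in e).
    by exists e; rewrite ?setU11.
  have [|f fM vf] := pmatching_cover (v := v) MV; first by rewrite inE ve.
  by exists f; rewrite // inE fM orbT.
- move=> e1 e2' v; rewrite !inE => /orP[/eqP->|e1M] /orP[/eqP->|e2M] v1 v2 //.
  + by move: (eM_disj _ _ e2M v2); rewrite v1.
  + by move: (eM_disj _ _ e1M v1); rewrite v2.
  + exact: pmatching_uniq MV e1M e2M v1 v2.
Qed.

Lemma pmatching_trivIset V M : M \in pmatchings V -> trivIset M.
Proof.
move=> MV; apply/trivIsetP => A B AM BM neqAB.
rewrite -setI_eq0; apply/set0Pn => -[u]; rewrite inE => /andP[uA uB].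
by rewrite (pmatching_uniq MV AM BM uA uB) eqxx in neqAB.
Qed.

Lemma card_cover_pmatching V M F : M \in pmatchings V -> F \subset M ->
  #|cover F| = #|F| * 2.
Proof.
move=> MV FM; apply: card_uniform_partition.
  by move=> e eF; have [] := pmatching_edge MV (subsetP FM e eF).
rewrite /partition eqxx (trivIsetS FM (pmatching_trivIset MV)) /=.
by apply/negP => /(subsetP FM)/(pmatching_edge MV)[]; rewrite cards0.
Qed.

Lemma cover_pmatching V M : M \in pmatchings V -> cover M = V.
Proof.
move=> MV; apply/setP => u; apply/bigcupP/idP => [[e eM ue]|uV].
  by have [_ /subsetP] := pmatching_edge MV eM; apply.
by have [e eM ue] := pmatching_cover MV uV; exists e.
Qed.

Lemma card_pmatching V M k : #|V| = k.*2 -> M \in pmatchings V -> #|M| = k.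
Proof.
move=> cardV MV; have := card_cover_pmatching MV (subxx M).
by rewrite (cover_pmatching MV) cardV muln2 => /double_inj.
Qed.

Lemma card_pmatchings_edge V v w : v \in V -> w \in V -> w != v ->
  #|[set M in pmatchings V | [set v; w] \in M]| =
  #|pmatchings (V :\: [set v; w])|.
Proof.
move=> vV wV wv; set e := [set v; w].
have eV : e \subset V by apply/subsetP => u; rewrite !inE => /orP[]/eqP->.
have e2 : #|e| = 2 by rewrite cards2 eq_sym wv.
rewrite -(card_in_imset (f := fun M => M :\ e)); last first.
  move=> M1 M2; rewrite !inE => /andP[_ eM1] /andP[_ eM2] eqM.
  by rewrite -(setD1K eM1) eqM setD1K.
suff -> : [set M :\ e | M in [set M in pmatchings V | e \in M]] =
          pmatchings (V :\: e) by [].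
apply/eqP; rewrite eqEsubset; apply/andP; split.
  apply/subsetP => _ /imsetP[M /setIdP[MV eM] ->].
  by have := pmatching_setD MV (F := [set e]); rewrite cover1 sub1set; apply.
apply/subsetP => M MV; apply/imsetP; exists (e |: M).
  by rewrite inE pmatching_setU1 // setU11.
rewrite setU1K //; apply/negP => eM.
have [_ /subsetP/(_ v)] := pmatching_edge MV eM.
by rewrite !inE eqxx => /(_ isT).
Qed.

Lemma pmatching_edge_at V M e v : M \in pmatchings V -> e \in M -> v \in e ->
  exists2 w, e = [set v; w] & w \in V :\ v.
Proof.
move=> MV eM ve; have [e2 eV] := pmatching_edge MV eM.
move: e2; rewrite (cardsD1 v) ve add1n => -[] /eqP/cards1P[w Dw].
have /setD1P[wv we] : w \in e :\ v by rewrite Dw set11.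
exists w; last by rewrite !inE wv (subsetP eV).
apply/setP => u; rewrite !inE; have [-> //|uv] := eqVneq u v.
by have /setP/(_ u) := Dw; rewrite !inE uv.
Qed.

Lemma sum_pmatching_edges_at V M v : M \in pmatchings V -> v \in V ->
  \sum_(w in V :\ v) ([set v; w] \in M : nat) = 1.
Proof.
move=> MV vV; have [e eM ve] := pmatching_cover MV vV.
have [w Dw wV] := pmatching_edge_at MV eM ve.
rewrite (bigD1 w) //= -Dw eM big1 // => u /andP[uV uw].
apply/eqP; rewrite eqb0; apply: contraNN uw => vuM.
have /setP/(_ u) := pmatching_uniq MV vuM eM (setU11 _ _) ve.
rewrite Dw !inE eqxx orbT => /esym/orP[/eqP uv|//].
by move: uV; rewrite uv !inE eqxx.
Qed.

Lemma card_pmatchings V k : #|V| = k.*2 -> #|pmatchings V| = dfact k.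
Proof.
elim: k V => [|k IHk] V cardV /=.
  move/cards0_eq: cardV => ->; apply/eqP/cards1P; exists set0.
  apply/setP => M; rewrite in_set1; apply/idP/eqP => [MV|->]; last first.
    by apply: pmatchingI => [e|v|e1 e2 v]; rewrite ?in_set0.
  apply/setP => e; rewrite in_set0; apply/negbTE/negP => eM.
  have [e2 /subset_leq_card] := pmatching_edge MV eM.
  by rewrite cards0 e2.
have [v vV] : exists v, v \in V by apply/set0Pn; rewrite -card_gt0 cardV.
transitivity
  (\sum_(M in pmatchings V) \sum_(w in V :\ v) ([set v; w] \in M : nat)).
  by rewrite -sum1_card; apply: eq_bigr => M MV; rewrite sum_pmatching_edges_at.
rewrite exchange_big /= (eq_bigr (fun=> dfact k)) ?sum_nat_const; last first.
  move=> w /setD1P[wv wV]; rewrite -big_mkcondr /= sum1dep_card.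
  rewrite card_pmatchings_edge // IHk // cardsD (setIidPr _); last first.
    by apply/subsetP => u; rewrite !inE => /orP[]/eqP->.
  by rewrite cards2 eq_sym wv cardV doubleS !subSS subn0.
by move: cardV; rewrite (cardsD1 v) vV add1n doubleS => -[->].
Qed.

Lemma card_pmatchings_sup V F :
  #|[set M in pmatchings V | F \subset M]| <= #|pmatchings (V :\: cover F)|.
Proof.
rewrite -(card_in_imset (f := fun M => M :\: F)); last first.
  move=> M1 M2; rewrite !inE => /andP[_ FM1] /andP[_ FM2] eqM.
  by rewrite -(setID M1 F) -(setID M2 F) (setIidPr FM1) (setIidPr FM2) eqM.
apply/subset_leq_card/subsetP => _ /imsetP[M /setIdP[MV FM] ->].
exact: pmatching_setD.
Qed.

Lemma card_pmatchings_meet V N n x : #|V| = n.*2 -> N \in pmatchings V ->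
  #|[set M in pmatchings V | x <= #|M :&: N|]| <= 'C(n, x) * dfact (n - x).
Proof.
move=> cardV NV.
pose draws := [set F : {set {set T}} | F \subset N & #|F| == x].
have cardN : #|N| = n := card_pmatching cardV NV.
pose containing F := [set M in pmatchings V | F \subset M].
apply: (@leq_trans #|\bigcup_(F in draws) containing F|).
  apply/subset_leq_card/subsetP => M /setIdP[MV xMN].
  have : 0 < #|[set F : {set {set T}} | F \subset M :&: N & #|F| == x]|.
    by rewrite cards_draws bin_gt0.
  rewrite card_gt0 => /set0Pn[F /setIdP[FMN cardF]].
  apply/bigcupP; exists F.
    by rewrite inE cardF andbT (subset_trans FMN (subsetIr _ _)).
  by rewrite inE MV (subset_trans FMN (subsetIl _ _)).
apply: leq_trans (card_bigcup_leq _ _) _.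
have <- : #|draws| = 'C(n, x) by rewrite cards_draws cardN.
rewrite -sum_nat_const.
apply: leq_sum => F /setIdP[FN /eqP cardF].
apply: leq_trans (card_pmatchings_sup _ F) _.
rewrite (card_pmatchings (k := n - x)) // cardsD (setIidPr _); last first.
  by apply/bigcupsP => e eF; have [] := pmatching_edge NV (subsetP FN e eF).
by rewrite (card_cover_pmatching NV FN) cardF cardV muln2 doubleB.
Qed.

End PerfectMatchings.

Lemma dfact_bin n x : x <= n ->
  x`! * ('C(2 * n, x) * 'C(2 * n - x, x)) * dfact (n - x) =
  2 ^ x * 'C(n, x) * dfact n.
Proof.
move=> le_xn.
(* Both sides become (2n)! once multiplied by K. *)
have K_gt0 : 0 < 2 ^ (n - x) * (n - x)`! * x`!.
  by rewrite !muln_gt0 expn_gt0 !fact_gt0.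
apply/eqP; rewrite -(eqn_pmul2r K_gt0); apply/eqP.
transitivity ((2 * n)`!).
  transitivity ('C(2 * n, x) * (x`! * ('C(2 * n - x, x) *
     (x`! * (dfact (n - x) * (2 ^ (n - x) * (n - x)`!)))))); first ring.
  rewrite dfactE; have -> : (n - x).*2 = 2 * n - x - x by lia.
  by rewrite !bin_fact //; lia.
transitivity (dfact n * (2 ^ x * 2 ^ (n - x)) * ('C(n, x) * (x`! * (n - x)`!))).
  by rewrite -expnD subnKC // bin_fact // -mulnA dfactE mul2n.
by ring.
Qed.

Lemma ltn_mul_bin_dfact n x s : x <= n ->
  ((s%:R : rat) < ((x`!)%:R / (2 ^ x)%:R) *
     (('C(2 * n, x) * 'C(2 * n - x, x))%:R / ('C(n, x) ^ 2)%:R))%R ->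
  s * ('C(n, x) * dfact (n - x)) < dfact n.
Proof.
move=> le_xn; have Cnx_gt0 : 0 < 'C(n, x) by rewrite bin_gt0.
rewrite mulf_div -!natrM ltr_pdivlMr ?ltr0n ?muln_gt0 ?expn_gt0 ?Cnx_gt0 //.
rewrite -natrM ltr_nat => lt_s.
have K_gt0 : 0 < 2 ^ x * 'C(n, x) by rewrite muln_gt0 expn_gt0 Cnx_gt0.
rewrite -(ltn_pmul2r K_gt0).
rewrite [dfact n * _]mulnC -dfact_bin //.
have -> : s * ('C(n, x) * dfact (n - x)) * (2 ^ x * 'C(n, x)) =
          s * (2 ^ x * 'C(n, x) ^ 2) * dfact (n - x) by ring.
by rewrite ltn_pmul2r ?dfact_gt0.
Qed.

Lemma pmatchingsE m (M : {set {set 'I_m}}) :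
  perfect_matching M = (M \in pmatchings [set: 'I_m]).
Proof.
rewrite /perfect_matching inE; congr (_ && _); apply: eq_forallb => e /=.
  by rewrite /is_edge subsetT andbT.
by rewrite in_setT.
Qed.

Theorem theorem2 (n x s : nat) (hx : 0 < x) (hxn : x <= n)
  (Ms : 'I_s -> {set {set 'I_(2 * n)}})
  (hMs : forall i, perfect_matching (Ms i))
  (hs : ((s%:R : rat) <
        ((x`!)%:R / (2 ^ x)%:R) *
        (('C(2 * n, x) * 'C(2 * n - x, x))%:R / ('C(n, x) ^ 2)%:R))%R) :
  exists M : {set {set 'I_(2 * n)}},
    perfect_matching M /\ forall i, #|M :&: Ms i| <= x - 1.
Proof.
pose P := pmatchings [set: 'I_(2 * n)].
have cardT : #|[set: 'I_(2 * n)]| = n.*2 by rewrite cardsT card_ord mul2n.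
pose bad i := [set M in P | x <= #|M :&: Ms i|].
have card_bad_lt : #|\bigcup_(i in [set: 'I_s]) bad i| < #|P|.
  apply: leq_ltn_trans (card_bigcup_leq _ _) _.
  rewrite (card_pmatchings cardT).
  apply: leq_ltn_trans _ (ltn_mul_bin_dfact hxn hs).
  apply: (@leq_trans (\sum_(i in [set: 'I_s]) 'C(n, x) * dfact (n - x))).
    apply: leq_sum => i _.
    by apply: card_pmatchings_meet cardT _; rewrite -pmatchingsE.
  by rewrite sum_nat_const cardsT card_ord.
have [M MP notbad] :
    exists2 M, M \in P & M \notin \bigcup_(i in [set: 'I_s]) bad i.
  apply/subsetPn; apply: contraTN card_bad_lt => /subset_leq_card.
  by rewrite leqNgt.
exists M; split=> [|i]; first by rewrite pmatchingsE.
have : M \notin bad i by apply: contra notbad => badM; apply/bigcupP; exists i.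
by rewrite inE MP /= -ltnNge; lia.
Qed.
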